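(* Let $q=p^m$ with $p$ an odd prime, $q\equiv 1\pmod 3$, $q\geq 13$. In the graph $C_P(q)$: (a) for all nonzero $r,s\in GF(q)$, the induced subgraphs $[P_r]$ and $[P_s]$ are isomorphic; (b) for every nonzero $r$ and distinct $i,j\in GF(q)$, the edge set of $[B_i(r)\cup B_j(r)]$ is a perfect matching between $B_i(r)$ and $B_j(r)$; (c) for every nonzero $r$, $[P_r]$ is regular of degree $q-1$; (d) for every non-isolated vertex $v$ of $C_P(q)$, the subgraph induced by the set $N(v)$ of neighbors of $v$ is $2$-regular, i.e. a disjoint union of cycles.
   Context: $PGL(2,q)$ is the group of maps $x\mapsto\frac{ax+b}{cx+d}$ ($a,b,c,d\in GF(q)$, $ad\neq bc$) acting on $GF(q)\cup\{\infty\}$ with the usual conventions ($-d/c\mapsto\infty$, $\infty\mapsto a/c$ if $c\neq0$, $\infty\mapsto\infty$ if $c=0$). For $K,i\in GF(q)$ and $r\in GF(q)\setminus\{0\}$, $f_{K,r,i}$ is the element of $PGL(2,q)$ with $f_{K,r,i}(x)=K+\frac{r}{x-i}$ for $x\notin\{i,\infty\}$, $f_{K,r,i}(\infty)=K$, $f_{K,r,i}(i)=\infty$. For $r\neq0$, $P_r=\{f_{a,r,i}: a,i\in GF(q)\}$ and $B_i(r)=\{f_{a,r,i}:a\in GF(q)\}$. $hd(\pi,\sigma)$ is the number of points at which $\pi,\sigma$ differ. With distinguished element $F=\infty$, $\pi^{\triangle}$ is the permutation with $\pi^{\triangle}(\pi^{-1}(\infty))=\pi(\infty)$, $\pi^{\triangle}(\infty)=\infty$,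 $\pi^{\triangle}(x)=\pi(x)$ otherwise. The contraction graph $C_P(q)$ has vertex set $PGL(2,q)$, with distinct $\pi,\sigma$ adjacent iff $hd(\pi^{\triangle},\sigma^{\triangle})=q-4$. For a vertex set $S$, $[S]$ denotes the induced subgraph of $C_P(q)$ on $S$. *)

From HB Require Import structures.
From mathcomp Require Import all_boot all_order all_algebra all_fingroup all_field.
Set Implicit Arguments. Unset Strict Implicit. Unset Printing Implicit Defensive.
Import GRing.Theory.
Local Open Scope ring_scope.

(* The projective line GF(q) ∪ {∞} is modelled as [option F], with None = ∞. *)
Section PGL.
Variable F : finFieldType.

Definition mobius (a b c d : F) (x : option F) : option F :=
  if c == 0 then
    match x with Some y => Some ((a * y + b) / d) | None => None end
  else
    match x with
    | Some y => if y == - d / c then None else Some ((a * y + b) / (c * y + d))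
    | None => Some (a / c)
    end.

Definition PGL : {set {perm option F}} :=
  [set s : {perm option F} | [exists a : F, exists b : F, exists c : F, exists d : F,
     (a * d != b * c) && [forall x, s x == mobius a b c d x]]].

Definition fKri (K r i : F) (x : option F) : option F :=
  match x with
  | Some y => if y == i then None else Some (K + r / (y - i))
  | None => Some K
  end.

Definition Pr (r : F) : {set {perm option F}} :=
  [set s in PGL | [exists a : F, exists i : F, [forall x, s x == fKri a r i x]]].

Definition Bi (r i : F) : {set {perm option F}} :=
  [set s in PGL | [exists a : F, [forall x, s x == fKri a r i x]]].

Definition contr (s : {perm option F}) (x : option F) : option F :=
  if x == None then None
  else if s x == None then s None else s x.

Definition hd (f g : option F -> option F) : nat := #|[pred x | f x != g x]|.

Definition adj (s t : {perm option F}) : bool :=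
  [&& s \in PGL, t \in PGL, s != t & hd (contr s) (contr t) == (#|F| - 4)%N].

Definition nbhd (v : {perm option F}) : {set {perm option F}} :=
  [set w in PGL | adj v w].
End PGL.

From HB Require Import structures.
From mathcomp Require Import all_boot all_order all_algebra all_fingroup all_solvable all_field.
From mathcomp Require Import ring zify.
Set Implicit Arguments. Unset Strict Implicit. Unset Printing Implicit Defensive.
Import GRing.Theory.
Local Open Scope ring_scope.

(* Away from ∞, the contraction of f_{K,r,i} is x |-> K + r/(x - i) and that of an affine
   map is x |-> ax + b, so two vertices are adjacent iff these functions agree at exactly four
   points of GF(q). Clearing denominators turns agreement off the poles into a quadratic
   equation: two such functions agree at most at their two poles and two further points, and
   at four points only if the poles i, j differ, s = r and L = K + r/(j - i). Conversely such
   a pair agrees at i, j and at i + t(j - i) for the two roots t of X^2 - X + 1, which exist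
   as q = 1 (mod 3). Hence affine maps are isolated and the neighbours of f_{K,r,i} are the
   f_{K + r/(k - i), r, k} with k <> i, which gives (b) and (c); the common neighbours of two
   adjacent vertices correspond to their two agreement points other than the poles, which
   gives (d). Multiplying values by s/r fixes ∞, so it commutes with contraction and maps P_r
   onto P_s, which gives (a). Only q = 1 (mod 3) and q >= 4 are needed. *)

Lemma exists_root_X2_X_1 (F : finFieldType) :
  (#|F| %% 3 = 1)%N -> exists2 t : F, t ^+ 2 - t + 1 = 0 & t != 1 - t.
Proof.
move=> F3; have [u _ ord_u] : {u : {unit F} | u \in [set: {unit F}] & #[u]%g = 3%N}.
  by apply: Cauchy => //; rewrite card_finField_unit; lia.
set w := FinRing.uval u.
have w3 : w ^+ 3 = 1 by rewrite -FinRing.val_unitX -ord_u expg_order.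
have w_neq1 : w != 1.
  apply: contraTneq isT => w1; suff : (#[u]%g == 1)%N by rewrite ord_u.
  by rewrite order_eq1; apply/eqP/val_inj.
have w_neq0 : w != 0 by apply: contra_eq_neq w3 => ->; rewrite expr0n eq_sym oner_eq0.
have w2 : w ^+ 2 + w + 1 = 0.
  have : (w - 1) * (w ^+ 2 + w + 1) = w ^+ 3 - 1 by ring.
  rewrite w3 subrr => /eqP.
  by rewrite mulf_eq0 subr_eq0 (negbTE w_neq1) => /eqP.
exists (- w); first by rewrite -w2; ring.
rewrite -subr_eq0 (_ : - w - (1 - - w) = w * (w - 1) - (w ^+ 2 + w + 1)); last by ring.
by rewrite w2 subr0 mulf_neq0 // subr_eq0.
Qed.

Section Agreement.
Variable F : finFieldType.

(* At [x = i] this is [K = f_{K,r,i}(∞)] because [r / 0 = 0], as the contraction requires. *)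
Definition hyp (K r i x : F) := K + r / (x - i).
Definition aff (a b x : F) := a * x + b.
Definition agree (g h : F -> F) := [set x | g x == h x].

Lemma agreeC (g h : F -> F) : agree g h = agree h g.
Proof. by apply/setP => x; rewrite !inE eq_sym. Qed.

Lemma card_quadratic_roots (S D : {set F}) (c2 c1 c0 : F) :
  ~~ [&& c2 == 0, c1 == 0 & c0 == 0] ->
  {in S, forall x, x \notin D -> c2 * x ^+ 2 + c1 * x + c0 = 0} ->
  (#|S| <= #|S :&: D| + 2)%N.
Proof.
move=> c_neq0 rootS.
pose p := \poly_(k < 3) [:: c0; c1; c2]`_k.
have pE x : p.[x] = c2 * x ^+ 2 + c1 * x + c0.
  by rewrite horner_poly !big_ord_recr big_ord0 /=; ring.
have p_neq0 : p != 0.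
  apply: contra c_neq0 => /eqP p0; have c k : p`_k = 0 by rewrite p0 coef0.
  by move: (c 0%N) (c 1%N) (c 2%N); rewrite !coef_poly /= => -> -> ->; rewrite eqxx.
have : (#|S :\: D| < size p)%N.
  rewrite cardE; apply: max_poly_roots p_neq0 _ (enum_uniq _).
  by apply/allP => x; rewrite mem_enum !inE /root pE => /andP [xD xS]; rewrite rootS.
have : (size p <= 3)%N by apply: size_poly.
rewrite -(cardsID D S); lia.
Qed.

Lemma card_agree_aff (a b a' b' : F) : (a, b) != (a', b') ->
  (#|agree (aff a b) (aff a' b')| <= 2)%N.
Proof.
move=> ab; have := @card_quadratic_roots (agree (aff a b) (aff a' b')) set0 0 (a - a') (b - b').
rewrite setI0 cards0; apply; first by rewrite eqxx !subr_eq0 -xpair_eqE.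
move=> x; rewrite inE /aff => /eqP E _.
have -> : 0 * x ^+ 2 + (a - a') * x + (b - b') = (a * x + b) - (a' * x + b') by ring.
by rewrite E subrr.
Qed.

Lemma card_quadratic_roots_off1 (S : {set F}) (i c2 c1 c0 : F) :
  ~~ [&& c2 == 0, c1 == 0 & c0 == 0] ->
  {in S, forall x, x != i -> c2 * x ^+ 2 + c1 * x + c0 = 0} -> (#|S| <= 3)%N.
Proof.
move=> c_neq0 rootS.
have : (#|S| <= #|S :&: [set i]| + 2)%N.
  by apply: card_quadratic_roots c_neq0 _ => x xS; rewrite in_set1; exact: rootS.
have : (#|S :&: [set i]| <= 1)%N by rewrite -(cards1 i) subset_leq_card // subsetIr.
lia.
Qed.

Lemma card_agree_aff_hyp (a b K r i : F) : a != 0 ->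
  (#|agree (aff a b) (hyp K r i)| <= 3)%N.
Proof.
move=> a0; apply: (card_quadratic_roots_off1 (i := i) (c2 := a)
  (c1 := b - K - a * i) (c0 := - (b - K) * i - r)); first by rewrite (negbTE a0).
move=> x; rewrite inE /hyp /aff => /eqP E xi; have xi' : x - i != 0 by rewrite subr_eq0.
have -> : a * x ^+ 2 + (b - K - a * i) * x + (- (b - K) * i - r)
  = (x - i) * ((a * x + b) - (K + r / (x - i))) by field.
by rewrite E subrr mulr0.
Qed.

Lemma card_agree_hyp_pole (K r L s i : F) : (K, r) != (L, s) ->
  (#|agree (hyp K r i) (hyp L s i)| <= 3)%N.
Proof.
move=> KrLs; apply: (card_quadratic_roots_off1 (i := i) (c2 := 0)
  (c1 := K - L) (c0 := r - s - (K - L) * i)).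
  apply: contra KrLs => /and3P [_ /eqP KL]; rewrite KL mul0r subr0 => /eqP rs.
  by rewrite xpair_eqE (subr0_eq KL) (subr0_eq rs) !eqxx.
move=> x; rewrite inE /hyp => /eqP E xi; have xi' : x - i != 0 by rewrite subr_eq0.
have -> : 0 * x ^+ 2 + (K - L) * x + (r - s - (K - L) * i)
  = (x - i) * ((K + r / (x - i)) - (L + s / (x - i))) by field.
by rewrite E subrr mulr0.
Qed.

Lemma card_agree_hyp (K r L s i j : F) : i != j -> r != 0 ->
  (#|agree (hyp K r i) (hyp L s j)|
     <= #|agree (hyp K r i) (hyp L s j) :&: [set i; j]| + 2)%N.
Proof.
move=> ij r0; apply: (card_quadratic_roots (c2 := K - L)
  (c1 := - (K - L) * (i + j) + r - s) (c0 := (K - L) * i * j - r * j + s * i)).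
  apply/negP => /and3P [/eqP KL /eqP c1 /eqP c0].
  have rs : r = s by apply: subr0_eq; rewrite -c1 KL; ring.
  have : r * (i - j) = 0 by rewrite -c0 KL rs; ring.
  by move/eqP; rewrite mulf_eq0 subr_eq0 (negbTE r0) (negbTE ij).
move=> x; rewrite !inE /hyp negb_or => /eqP E /andP [xi xj].
have xi' : x - i != 0 by rewrite subr_eq0.
have xj' : x - j != 0 by rewrite subr_eq0.
have -> : (K - L) * x ^+ 2 + (- (K - L) * (i + j) + r - s) * x + ((K - L) * i * j - r * j + s * i)
  = (x - i) * (x - j) * ((K + r / (x - i)) - (L + s / (x - j))).
  by field; rewrite xi' xj'.
by rewrite E subrr mulr0.
Qed.

Lemma card_agree_hyp_le4 (K r L s i j : F) : i != j -> r != 0 ->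
  (#|agree (hyp K r i) (hyp L s j)| <= 4)%N.
Proof.
move=> ij r0; have := card_agree_hyp K L s ij r0.
have : (#|agree (hyp K r i) (hyp L s j) :&: [set i; j]| <= 2)%N.
  by rewrite (leq_trans (subset_leq_card (subsetIr _ _))) // cards2 ij.
lia.
Qed.

Lemma agree_hyp_poles (K r L s i j : F) : i != j -> r != 0 ->
  (4 <= #|agree (hyp K r i) (hyp L s j)|)%N ->
  [set i; j] \subset agree (hyp K r i) (hyp L s j).
Proof.
move=> ij r0 A4; have A_le := card_agree_hyp K L s ij r0.
by apply/setIidPr/eqP; rewrite eqEcard subsetIr cards2 ij; lia.
Qed.

Lemma agree_hyp_ge4 (K r L s i j : F) : i != j -> r != 0 ->
  (4 <= #|agree (hyp K r i) (hyp L s j)|)%N -> s = r /\ L = K + r / (j - i).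
Proof.
move=> ij r0 /(agree_hyp_poles ij r0)/subsetP A_ij.
have := A_ij i; have := A_ij j; rewrite !inE !eqxx orbT /hyp !subrr invr0 !mulr0 !addr0.
move=> /(_ isT)/eqP Lj /(_ isT)/eqP Ki; split; last by rewrite Lj.
have ji : j - i != 0 by rewrite subr_eq0 eq_sym.
have ij' : i - j != 0 by rewrite subr_eq0.
have : (r - s) / (j - i) = (K + r / (j - i)) - (K - s / (i - j)) by field; rewrite ji ij'.
rewrite Lj Ki addrK subrr => /eqP.
by rewrite mulf_eq0 invr_eq0 (negbTE ji) orbF subr_eq0 => /eqP.
Qed.

Lemma root_X2_X_1_neq01 (u : F) : u ^+ 2 - u + 1 = 0 -> (u != 0) && (u != 1).
Proof.
move=> u_root; apply/andP; split; apply: contra_eq_neq u_root => ->.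
  by rewrite expr0n subr0 add0r oner_neq0.
by rewrite expr1n subrr add0r oner_neq0.
Qed.

Lemma hyp_sum (d u r : F) : d != 0 -> u ^+ 2 - u + 1 = 0 ->
  r / (u * d) = r / d + r / ((u - 1) * d).
Proof.
move=> d0 u_root; have /andP [u0 u1] := root_X2_X_1_neq01 u_root.
rewrite -subr_eq0 in u1; apply/eqP; rewrite -subr_eq0.
have -> : r / (u * d) - (r / d + r / ((u - 1) * d)) = - r * (u ^+ 2 - u + 1) / (u * (u - 1) * d).
  by field; rewrite u0 u1 d0.
by rewrite u_root mulr0 mul0r.
Qed.

Lemma card_agree_hyp_nbr (t K r i j : F) :
  t ^+ 2 - t + 1 = 0 -> t != 1 - t -> i != j -> r != 0 ->
  #|agree (hyp K r i) (hyp (K + r / (j - i)) r j)| = 4%N.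
Proof.
move=> t_root t_simple ij r0; apply/eqP; rewrite eqn_leq card_agree_hyp_le4 //=.
set A := agree _ _; have d0 : j - i != 0 by rewrite subr_eq0 eq_sym.
have root_pt u : u ^+ 2 - u + 1 = 0 -> i + u * (j - i) \in A.
  move=> u_root; rewrite inE /hyp.
  rewrite (_ : i + u * (j - i) - i = u * (j - i)); last by ring.
  rewrite (_ : i + u * (j - i) - j = (u - 1) * (j - i)); last by ring.
  by rewrite (hyp_sum _ d0 u_root) addrA.
have pts u : u \in [:: 0; 1; t; 1 - t] -> i + u * (j - i) \in A.
  rewrite !in_cons in_nil orbF => /or4P [] /eqP ->.
  - by rewrite mul0r addr0 inE /hyp subrr invr0 mulr0 addr0 -[i - j]opprB invrN mulrN addrK.
  - by rewrite mul1r addrC subrK inE /hyp subrr invr0 mulr0 addr0.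
  - exact: root_pt.
  - by apply: root_pt; rewrite -t_root; ring.
have /andP [t0 t1] := root_X2_X_1_neq01 t_root.
have t_uniq : uniq [:: 0; 1; t; 1 - t].
  rewrite /= !inE !negb_or eq_sym oner_neq0 !(eq_sym 0) t0 subr_eq0 eq_sym t1.
  by rewrite t_simple -subr_eq0 opprB addrC subrK t0.
have pts_uniq : uniq [seq i + u * (j - i) | u <- [:: 0; 1; t; 1 - t]].
  by rewrite map_inj_uniq // => u v /addrI /(mulIf d0).
rewrite -[4%N]/(size [seq i + u * (j - i) | u <- [:: 0; 1; t; 1 - t]]) -(card_uniqP pts_uniq).
by apply/subset_leq_card/subsetP => x /mapP [u /pts ? ->].
Qed.
End Agreement.

Section Graph.
Variable F : finFieldType.

Definition contr_agree (s t : {perm option F}) :=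
  [set x : F | contr s (Some x) == contr t (Some x)].

Lemma hd_contr (s t : {perm option F}) :
  hd (contr s) (contr t) = (#|F| - #|contr_agree s t|)%N.
Proof.
have -> : hd (contr s) (contr t) = #|Some @: ~: contr_agree s t|.
  apply: eq_card => -[y|]; rewrite !inE.
    by rewrite mem_imset ?inE //; exact: Some_inj.
  by rewrite /contr /=; apply/esym/imsetP => -[].
rewrite card_imset; last exact: Some_inj.
by rewrite cardsCs setCK.
Qed.

Lemma adjE (s t : {perm option F}) : (4 <= #|F|)%N ->
  adj s t = [&& s \in PGL F, t \in PGL F, s != t & #|contr_agree s t| == 4%N].
Proof.
move=> F4; have A_le : (#|contr_agree s t| <= #|F|)%N by apply: max_card.
by rewrite /adj hd_contr; congr [&& _, _, _ & _]; apply/eqP/eqP; lia.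
Qed.

Lemma adjC (s t : {perm option F}) : adj s t = adj t s.
Proof.
rewrite /adj (eq_sym t) (_ : hd (contr s) (contr t) = hd (contr t) (contr s)).
  by case: (s \in PGL F); case: (t \in PGL F).
by apply: eq_card => x; rewrite !inE eq_sym.
Qed.

Lemma nbhdE (v w : {perm option F}) : (w \in nbhd v) = adj v w.
Proof. by rewrite inE /adj; case: (w \in PGL F); rewrite ?andbF. Qed.

Lemma contr_fKri (s : {perm option F}) (K r i : F) : s =1 fKri K r i ->
  forall x, contr s (Some x) = Some (hyp K r i x).
Proof.
move=> Hs x; rewrite /contr /= !Hs /fKri /hyp.
by case: (eqVneq x i) => [->|//]; rewrite subrr invr0 mulr0 addr0.
Qed.

Lemma contr_omap_aff (s : {perm option F}) (a b : F) : s =1 omap (aff a b) ->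
  forall x, contr s (Some x) = Some (aff a b x).
Proof. by move=> Hs x; rewrite /contr /= !Hs. Qed.

Lemma contr_agreeE (s t : {perm option F}) (g h : F -> F) :
  (forall x, contr s (Some x) = Some (g x)) ->
  (forall x, contr t (Some x) = Some (h x)) -> contr_agree s t = agree g h.
Proof. by move=> Hs Ht; apply/setP => x; rewrite !inE Hs Ht. Qed.

Lemma fKri_inj (K r i : F) : r != 0 -> injective (fKri K r i).
Proof.
have r_div_neq (y : F) : r != 0 -> y != i -> K + r / (y - i) != K.
  by move=> r0 yi; rewrite -subr_eq0 addrC addKr mulf_neq0 ?invr_neq0 ?subr_eq0.
move=> r0 [y|] [y'|] //=.
- case: (eqVneq y i) => [->|yi]; case: (eqVneq y' i) => [->|y'i] //= [].
  by move/addrI/(mulfI r0)/invr_inj/subIr => ->.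
- by case: eqP => // /eqP yi [] /eqP; rewrite (negbTE (r_div_neq _ r0 yi)).
- by case: eqP => // /eqP yi [] /esym/eqP; rewrite (negbTE (r_div_neq _ r0 yi)).
Qed.

Lemma fKri_params (K r i L s j : F) :
  fKri K r i =1 fKri L s j -> [/\ K = L, i = j & r = s].
Proof.
move=> H; have [KL] := H None; have := H (Some i); rewrite /= eqxx.
case: eqVneq => // ij _; subst; split=> //.
have e : j + 1 - j = 1 by rewrite addrAC subrr add0r.
have := H (Some (j + 1)); rewrite /= -subr_eq0 e oner_eq0 /= !divr1.
by case=> /addrI.
Qed.

Lemma fKri_PGL (s : {perm option F}) (K r i : F) : r != 0 ->
  s =1 fKri K r i -> s \in PGL F.
Proof.
move=> r0 Hs; rewrite inE; apply/existsP; exists K; apply/existsP; exists (r - K * i).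
apply/existsP; exists 1; apply/existsP; exists (- i); apply/andP; split.
  by rewrite mulr1 mulrN eq_sym subr_eq addNr.
apply/forallP => -[y|]; rewrite Hs /mobius oner_eq0 /=; last by rewrite divr1.
rewrite opprK divr1 mul1r; case: (eqVneq y i) => // yi.
have yi' : y - i != 0 by rewrite subr_eq0.
by apply/eqP; congr Some; field.
Qed.

Lemma PGL_cases (s : {perm option F}) : s \in PGL F ->
  (exists a b, a != 0 /\ s =1 omap (aff a b)) \/
  (exists K r i, r != 0 /\ s =1 fKri K r i).
Proof.
rewrite inE => /existsP [a /existsP [b /existsP [c /existsP [d /andP [ad_bc /forallP Hs]]]]].
have {}Hs x : s x = mobius a b c d x by apply/eqP.
have [c0|c0] := eqVneq c 0.
  move: ad_bc; rewrite c0 mulr0 mulf_eq0 negb_or => /andP [a0 d0].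
  left; exists (a / d), (b / d); split; first by rewrite mulf_neq0 ?invr_neq0.
  by move=> [y|]; rewrite Hs /mobius c0 eqxx //= /aff mulrDl mulrAC.
right; exists (a / c), ((b * c - a * d) / c ^+ 2), (- d / c); split.
  by rewrite mulf_neq0 ?invr_neq0 ?expf_neq0 // subr_eq0 eq_sym.
move=> [y|]; rewrite Hs /mobius (negbTE c0) //=; case: eqVneq => // yd.
have yd' : y - - d / c != 0 by rewrite subr_eq0.
have cyd : c * y + d != 0.
  by rewrite (_ : c * y + d = c * (y - - d / c)) ?mulf_neq0 //; field.
by congr Some; field; rewrite c0 opprK mulrC cyd.
Qed.

(* [nz] only makes [hperm] total in [r]; it is always used with [r != 0]. *)
Definition nz (r : F) := if r == 0 then 1 else r.

Lemma nz_neq0 (r : F) : nz r != 0.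
Proof. by rewrite /nz; case: (eqVneq r 0) => // _; exact: oner_neq0. Qed.

Definition hperm (K r i : F) : {perm option F} := perm (fKri_inj (K := K) (i := i) (nz_neq0 r)).

Lemma hpermE (K r i : F) : r != 0 -> hperm K r i =1 fKri K r i.
Proof. by move=> r0 o; rewrite permE /nz (negbTE r0). Qed.

Lemma hperm_inj (K r i L j : F) : r != 0 -> hperm K r i = hperm L r j -> K = L /\ i = j.
Proof.
move=> r0 e; suff /fKri_params [] : fKri K r i =1 fKri L r j by [].
by move=> o; rewrite -!hpermE // e.
Qed.

Lemma PrP (r : F) (x : {perm option F}) :
  reflect (x \in PGL F /\ exists a i, x =1 fKri a r i) (x \in Pr r).
Proof.
rewrite [_ \in Pr r]inE; apply: (iffP andP) => -[xP].
  by case/existsP => a /existsP [i /forallP H]; split=> //; exists a, i => o; apply/eqP.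
case=> a [i H]; split=> //; apply/existsP; exists a; apply/existsP; exists i.
by apply/forallP => o; rewrite H.
Qed.

Lemma BiP (r i : F) (x : {perm option F}) :
  reflect (x \in PGL F /\ exists a, x =1 fKri a r i) (x \in Bi r i).
Proof.
rewrite [_ \in Bi r i]inE; apply: (iffP andP) => -[xP].
  by case/existsP => a /forallP H; split=> //; exists a => o; apply/eqP.
by case=> a H; split=> //; apply/existsP; exists a; apply/forallP => o; rewrite H.
Qed.

Lemma hperm_PGL (K r i : F) : r != 0 -> hperm K r i \in PGL F.
Proof. by move=> r0; apply: fKri_PGL r0 (hpermE _ _ r0). Qed.

Lemma hperm_Pr (K r i : F) : r != 0 -> hperm K r i \in Pr r.
Proof. by move=> r0; apply/PrP; split; [exact: hperm_PGL | exists K, i; exact: hpermE]. Qed.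

Lemma hperm_Bi (K r i j : F) : r != 0 -> (hperm K r i \in Bi r j) = (i == j).
Proof.
move=> r0; apply/BiP/eqP => [[_ [a H]] | <-].
  by suff /fKri_params [] : fKri K r i =1 fKri a r j by []; move=> o; rewrite -hpermE.
by split; [exact: hperm_PGL | exists K; exact: hpermE].
Qed.

Definition nbr (K r i k : F) := hperm (K + r / (k - i)) r k.

Lemma nbr_inj (K r i : F) : r != 0 -> injective (nbr K r i).
Proof. by move=> r0 k k' /(hperm_inj r0) []. Qed.

Lemma contr_mulg (x M : {perm option F}) : M None = None ->
  contr (x * M)%g =1 M \o contr x.
Proof.
move=> MN [y|]; last by rewrite /contr /= MN.
have M_None z : (M z == None) = (z == None) by rewrite -{1}MN (inj_eq perm_inj).
by rewrite /contr /= !permM M_None; case: ifP.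
Qed.

Lemma hd_contr_mulg (x y M : {perm option F}) : M None = None ->
  hd (contr (x * M)%g) (contr (y * M)%g) = hd (contr x) (contr y).
Proof. by move=> MN; apply: eq_card => o; rewrite !inE !contr_mulg //= (inj_eq perm_inj). Qed.

Lemma omap_mul_fKri (l a r i : F) o :
  omap ( *%R l) (fKri a r i o) = fKri (l * a) (l * r) i o.
Proof. by case: o => [y|] //=; case: ifP => //= _; rewrite mulrDr mulrA. Qed.

Lemma Pr_iso (r s : F) : r != 0 -> s != 0 ->
  exists phi : {perm option F} -> {perm option F},
    [/\ {in Pr r &, injective phi}, phi @: Pr r = Pr s &
        {in Pr r &, forall x y, adj (phi x) (phi y) = adj x y}].
Proof.
move=> r0 s0; pose l := s / r; have l0 : l != 0 by rewrite mulf_neq0 ?invr_neq0.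
have lr : l * r = s by rewrite /l divfK.
have M_inj : injective (omap ( *%R l)) by move=> [x|] [y|] //= [] /(mulfI l0) ->.
pose M := perm M_inj; have ME o : M o = omap ( *%R l) o by rewrite permE.
have PrM x : x \in Pr r -> (x * M)%g \in Pr s.
  case/PrP => _ [a [i Hx]].
  have HxM : (x * M)%g =1 fKri (l * a) s i.
    by move=> o; rewrite permM ME Hx omap_mul_fKri lr.
  by apply/PrP; split; [exact: fKri_PGL s0 HxM | exists (l * a), i].
exists (fun x => x * M)%g; split.
- by move=> x y _ _; apply: (can_inj (mulgK M)).
- apply/setP => x; apply/imsetP/idP => [[y yP ->] | /PrP [_ [a [i Hx]]]]; first exact: PrM.
  exists (hperm (a / l) r i); first exact: hperm_Pr.
  apply/permP => o; rewrite Hx permM ME hpermE // omap_mul_fKri lr.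
  by rewrite mulrCA mulfV // mulr1.
- move=> x y xP yP; have [xM yM] := (PrM x xP, PrM y yP).
  case/PrP: xP => xP _; case/PrP: yP => yP _; case/PrP: xM => xM _; case/PrP: yM => yM _.
  by rewrite /adj xP yP xM yM (inj_eq (can_inj (mulgK M))) hd_contr_mulg // ME.
Qed.

End Graph.

Section Neighbourhoods.
Variables (F : finFieldType) (t : F).
Hypotheses (t_root : t ^+ 2 - t + 1 = 0) (t_simple : t != 1 - t) (F_ge4 : (4 <= #|F|)%N).

Lemma nbhd_aff (v : {perm option F}) (a b : F) :
  a != 0 -> v =1 omap (aff a b) -> nbhd v = set0.
Proof.
move=> a0 Hv; apply/setP => u; rewrite nbhdE in_set0 adjE //.
apply/negP => /and4P [_ uP vu /eqP A4].
have [[a' [b' [a0' Hu]]] | [K [r [i [r0 Hu]]]]] := PGL_cases uP.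
  move: A4; rewrite (contr_agreeE (contr_omap_aff Hv) (contr_omap_aff Hu)).
  have [[ea eb] | ab] := eqVneq (a, b) (a', b').
    by subst a' b'; move: vu; rewrite (_ : v = u) ?eqxx //; apply/permP => o; rewrite Hv Hu.
  by move=> A4; have := card_agree_aff ab; rewrite A4.
move: A4; rewrite (contr_agreeE (contr_omap_aff Hv) (contr_fKri Hu)) => A4.
by have := @card_agree_aff_hyp _ a b K r i a0; rewrite A4.
Qed.

Lemma nbhd_fKri (v : {perm option F}) (K r i : F) : r != 0 -> v =1 fKri K r i ->
  nbhd v = nbr K r i @: [set~ i].
Proof.
move=> r0 Hv; apply/setP => u; rewrite nbhdE; apply/idP/imsetP.
  rewrite adjE // => /and4P [_ uP vu /eqP A4].
  have [[a [b [a0 Hu]]] | [L [s [j [s0 Hu]]]]] := PGL_cases uP.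
    move: A4; rewrite (contr_agreeE (contr_fKri Hv) (contr_omap_aff Hu)) agreeC => A4.
    by have := @card_agree_aff_hyp _ a b K r i a0; rewrite A4.
  move: A4; rewrite (contr_agreeE (contr_fKri Hv) (contr_fKri Hu)) => A4.
  have [ij | ij] := eqVneq i j.
    subst j; have [[eK er] | KrLs] := eqVneq (K, r) (L, s).
      by subst L s; move: vu; rewrite (_ : v = u) ?eqxx //; apply/permP => o; rewrite Hv Hu.
    by have := @card_agree_hyp_pole _ K r L s i KrLs; rewrite A4.
  have [sr LK] := agree_hyp_ge4 ij r0 (eq_leq (esym A4)); subst s L.
  exists j; first by rewrite in_setC1 eq_sym.
  by apply/permP => o; rewrite Hu hpermE.
case=> k; rewrite in_setC1 => ki ->.
rewrite adjE // (fKri_PGL r0 Hv) hperm_PGL //=; apply/andP; split.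
  by apply/eqP => e; move: (Hv (Some i)); rewrite e /nbr hpermE //= eqxx eq_sym (negbTE ki).
have ik : i != k by rewrite eq_sym.
rewrite (contr_agreeE (contr_fKri Hv) (contr_fKri (hpermE _ _ r0))).
by rewrite (card_agree_hyp_nbr _ t_root t_simple).
Qed.

Lemma card_nbhd_fKri (v : {perm option F}) (K r i : F) : r != 0 -> v =1 fKri K r i ->
  #|nbhd v| = (#|F| - 1)%N.
Proof.
move=> r0 Hv; rewrite (nbhd_fKri r0 Hv) card_imset; last exact: nbr_inj.
by rewrite cardsC1 subn1.
Qed.

Lemma Pr_nbhd (r : F) (v : {perm option F}) : r != 0 -> v \in Pr r ->
  [set w in Pr r | adj v w] = nbhd v.
Proof.
move=> r0 /PrP [_ [K [i Hv]]]; apply/setP => w; rewrite inE -nbhdE (nbhd_fKri r0 Hv).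
by apply/andb_idl => /imsetP [k _ ->]; exact: hperm_Pr.
Qed.

Lemma Bi_no_adj (r i : F) : r != 0 -> {in Bi r i &, forall x y, ~~ adj x y}.
Proof.
move=> r0 x y /BiP [_ [a Hx]] yB; rewrite -nbhdE (nbhd_fKri r0 Hx).
apply/negP => /imsetP [k]; rewrite in_setC1 => ki yk.
by move: yB; rewrite yk hperm_Bi // (negbTE ki).
Qed.

Lemma card_Bi_nbhd (r i j : F) (x : {perm option F}) : r != 0 -> i != j -> x \in Bi r i ->
  #|[set y in Bi r j | adj x y]| = 1%N.
Proof.
move=> r0 ij /BiP [_ [a Hx]].
suff -> : [set y in Bi r j | adj x y] = [set nbr a r i j] by rewrite cards1.
apply/setP => y; rewrite inE in_set1 -nbhdE (nbhd_fKri r0 Hx).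
apply/andP/eqP => [[yB /imsetP [k _ yk]] | ->].
  by move: yB; rewrite yk hperm_Bi // => /eqP ->.
by rewrite hperm_Bi // eqxx; split=> //; apply: imset_f; rewrite in_setC1 eq_sym.
Qed.

Lemma nbhd_common (v : {perm option F}) (K r i j : F) : r != 0 -> i != j -> v =1 fKri K r i ->
  nbhd v :&: nbhd (nbr K r i j)
  = nbr K r i @: (agree (hyp K r i) (hyp (K + r / (j - i)) r j) :\: [set i; j]).
Proof.
move=> r0 ij Hv; rewrite (nbhd_fKri r0 Hv) (nbhd_fKri r0 (hpermE _ _ r0)).
apply/setP => w; rewrite inE; apply/andP/imsetP.
  case=> /imsetP [k ki ->] /imsetP [k' k'j /(hperm_inj r0) [e kk']]; subst k'.
  exists k => //; move: ki k'j; rewrite !in_setC1 => ki kj.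
  by rewrite !inE negb_or ki kj /hyp e eqxx.
case=> k; rewrite !inE negb_or => /andP [/andP [ki kj] /eqP e] ->; split; apply/imsetP; exists k.
- by rewrite in_setC1.
- by [].
- by rewrite in_setC1.
- by rewrite /nbr; congr hperm.
Qed.

Lemma card_common_nbhd (v u : {perm option F}) : v \in PGL F -> u \in nbhd v ->
  #|nbhd v :&: nbhd u| = 2%N.
Proof.
move=> vP uv; have [[a [b [a0 Hv]]] | [K [r [i [r0 Hv]]]]] := PGL_cases vP.
  by rewrite (nbhd_aff a0 Hv) inE in uv.
move: uv; rewrite (nbhd_fKri r0 Hv) => /imsetP [j]; rewrite in_setC1 eq_sym => ij ->.
rewrite -(nbhd_fKri r0 Hv) (nbhd_common r0 ij Hv) card_imset; last exact: nbr_inj.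
have A4 := card_agree_hyp_nbr K t_root t_simple ij r0.
by rewrite cardsDS ?A4 ?cards2 ?ij // agree_hyp_poles // A4.
Qed.

Lemma Bi_matching (r i j : F) : r != 0 -> i != j ->
  [/\ {in Bi r i &, forall x y, ~~ adj x y},
      {in Bi r j &, forall x y, ~~ adj x y},
      {in Bi r i, forall x, #|[set y in Bi r j | adj x y]| = 1%N} &
      {in Bi r j, forall y, #|[set x in Bi r i | adj x y]| = 1%N}].
Proof.
move=> r0 ij; split; try exact: Bi_no_adj; first by move=> x; apply: card_Bi_nbhd.
move=> y yB; under eq_finset do rewrite adjC.
by apply: card_Bi_nbhd yB; rewrite // eq_sym.
Qed.

Lemma Pr_regular (r : F) : r != 0 ->
  {in Pr r, forall v, #|[set w in Pr r | adj v w]| = (#|F| - 1)%N}.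
Proof.
move=> r0 v vP; rewrite (Pr_nbhd r0 vP).
by case/PrP: vP => _ [K [i Hv]]; apply: card_nbhd_fKri r0 Hv.
Qed.

Lemma nbhd_2regular (v : {perm option F}) : v \in PGL F ->
  {in nbhd v, forall u, #|[set w in nbhd v | adj u w]| = 2%N}.
Proof.
move=> vP u uv; rewrite -(card_common_nbhd vP uv).
by apply: eq_card => w; rewrite in_set in_setI (nbhdE u).
Qed.

End Neighbourhoods.

Theorem theorem13 (F : finFieldType) (p m : nat) :
  prime p -> odd p -> #|F| = (p ^ m)%N -> (#|F| %% 3 = 1)%N -> (13 <= #|F|)%N ->
  (* (a) *)
  (forall r s : F, r != 0 -> s != 0 ->
     exists phi : {perm option F} -> {perm option F},
       [/\ {in Pr r &, injective phi}, phi @: Pr r = Pr s &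
           {in Pr r &, forall x y, adj (phi x) (phi y) = adj x y}]) /\
  (* (b) *)
  (forall r i j : F, r != 0 -> i != j ->
     [/\ {in Bi r i &, forall x y, ~~ adj x y},
         {in Bi r j &, forall x y, ~~ adj x y},
         {in Bi r i, forall x, #|[set y in Bi r j | adj x y]| = 1%N} &
         {in Bi r j, forall y, #|[set x in Bi r i | adj x y]| = 1%N}]) /\
  (* (c) *)
  (forall r : F, r != 0 ->
     {in Pr r, forall v, #|[set w in Pr r | adj v w]| = (#|F| - 1)%N}) /\
  (* (d) *)
  (forall v, v \in PGL F -> nbhd v != set0 ->
     {in nbhd v, forall u, #|[set w in nbhd v | adj u w]| = 2%N}).
Proof.
move=> _ _ _ F_mod3 F_ge13; have F_ge4 : (4 <= #|F|)%N by lia.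
have [t t_root t_simple] := exists_root_X2_X_1 F_mod3.
split; first exact: Pr_iso.
split; first exact: Bi_matching t_root t_simple F_ge4.
split; first exact: Pr_regular t_root t_simple F_ge4.
by move=> v vP _; exact (nbhd_2regular t_root t_simple F_ge4 vP).
Qed.
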